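(* For every bracket pattern $w$: $w\subseteq A(w)$, $\min(A(w))=1$, and $\max(A(w))=\|w\|$. In particular $A(w)\subseteq A(A(w))$.
   Context: $\mathbb N=\{1,2,\dots\}$, $\mathbb N_0=\mathbb N\cup\{0\}$. A bracket pattern is a non-empty finite subset $w\subseteq\mathbb N$; $\|w\|:=\max(w)$. The completion of a bracket pattern $w$ is $A(w):=\{j-i\mid j\in w,\ i\in\mathbb N_0,\ i\notin w,\ i<j\}$. *)

From HB Require Import structures.
From mathcomp Require Import all_boot all_order.
From mathcomp Require Import finmap.
Set Implicit Arguments. Unset Strict Implicit. Unset Printing Implicit Defensive.
Local Open Scope fset_scope.

Definition bracket_pattern (w : {fset nat}) : Prop :=
  w != fset0 /\ (0 \notin w).

Definition bnorm (w : {fset nat}) : nat := \max_(j <- w) j.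

Definition completion (w : {fset nat}) : {fset nat} :=
  [fset (j - i)%N | j in w, i in [fset i in iota 0 (bnorm w) | i \notin w]
                   & (i < j)%N].

From mathcomp Require Import all_boot all_order finmap.
Local Open Scope fset_scope.

(* For i = 0 the definition gives w <= A(w), and every difference j - i with
   i < j <= max w lies in [1, max w].  If m is the least element of w, then
   m - 1 is not in w, so 1 = m - (m - 1) is in A(w).  Hence A(w) is again a
   bracket pattern, and the first inclusion applied to it gives
   A(w) <= A(A(w)). *)

Section Completion.

Variable w : {fset nat}.

Lemma completionP a :
  reflect (exists j i,
             [/\ j \in w, (i < bnorm w)%N, i \notin w, (i < j)%N & a = j - i])
          (a \in completion w).
Proof.
apply: (iffP (imfset2P _ _ _ _ _)).
- move=> [j jw [i]]; rewrite !inE /= mem_iota add0n => /andP[/andP[ib iw] ij] ->.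
  by exists j, i.
- move=> [j [i [jw ib iw ij ->]]]; exists j => //; exists i => //.
  by rewrite !inE /= mem_iota add0n ib iw ij.
Qed.

Lemma leq_bnorm {j} : j \in w -> (j <= bnorm w)%N.
Proof. by move=> jw; apply: (@leq_bigmax_seq _ _ predT id). Qed.

Lemma bnorm_mem : w != fset0 -> bnorm w \in w.
Proof.
move=> /fset0Pn[j jw].
have [b0 | //] : bnorm w = 0 \/ bnorm w \in w.
  rewrite /bnorm big_seq_cond.
  apply: (big_ind (fun x => x = 0 \/ x \in w)) => [| x y | x /andP[xw _]].
  - by left.
  - by rewrite /maxn; case: ltnP.
  - by right.
by move: (leq_bnorm jw); rewrite b0 leqn0 => /eqP j0; rewrite -j0.
Qed.

Lemma completion_gt0 a : a \in completion w -> (0 < a)%N.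
Proof. by case/completionP=> [j [i [_ _ _ ij ->]]]; rewrite subn_gt0. Qed.

Lemma completion_leq_bnorm a : a \in completion w -> (a <= bnorm w)%N.
Proof.
case/completionP=> [j [i [jw _ _ _ ->]]].
exact: leq_trans (leq_subr _ _) (leq_bnorm jw).
Qed.

Hypothesis w_bp : bracket_pattern w.

Lemma bracket_pattern_gt0 {j} : j \in w -> (0 < j)%N.
Proof. by case: w_bp => _ w0; case: j => // /(negP w0). Qed.

Lemma sub_completion : w `<=` completion w.
Proof.
apply/fsubsetP=> j jw; have j_gt0 := bracket_pattern_gt0 jw.
apply/completionP; exists j, 0; split => //; last by rewrite subn0.
- exact: leq_trans j_gt0 (leq_bnorm jw).
- by case: w_bp.
Qed.

Lemma one_mem_completion : 1 \in completion w.
Proof.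
have w_ne : exists j, j \in w by apply/fset0Pn; case: w_bp.
case: (ex_minnP w_ne) => m mw m_min.
have m_gt0 := bracket_pattern_gt0 mw.
apply/completionP; exists m, m.-1; split => //.
- by rewrite prednK // leq_bnorm.
- by apply/negP=> /m_min; rewrite -ltnS prednK // ltnn.
- by rewrite prednK.
- by rewrite -subn1 subKn.
Qed.

Lemma bnorm_mem_completion : bnorm w \in completion w.
Proof. by apply: (fsubsetP sub_completion); apply: bnorm_mem; case: w_bp. Qed.

End Completion.

Lemma bracket_pattern_completion w :
  bracket_pattern w -> bracket_pattern (completion w).
Proof.
move=> w_bp; split.
- by apply/fset0Pn; exists 1; apply: one_mem_completion.
- by apply/negP=> /completion_gt0.
Qed.

Theorem lemma7p4 (w : {fset nat}) :
  bracket_pattern w ->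
  [/\ w `<=` completion w,
      (1 \in completion w /\ forall a, a \in completion w -> (1 <= a)%N),
      (bnorm w \in completion w /\
         forall a, a \in completion w -> (a <= bnorm w)%N)
    & completion w `<=` completion (completion w)].
Proof.
move=> w_bp; split.
- exact: sub_completion.
- by split; [apply: one_mem_completion | apply: completion_gt0].
- by split; [apply: bnorm_mem_completion | apply: completion_leq_bnorm].
- exact/sub_completion/bracket_pattern_completion.
Qed.
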